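(* Let $E,F$ be projections in $\mathcal B(\mathcal H)$. The following are equivalent: (1) $E\wedge F=0$ and $(E\vee F)\mathcal H=\{\xi+\beta:\ \xi\in E\mathcal H,\ \beta\in F\mathcal H\}$; (2) $E-F$ restricts to an invertible operator in $\mathcal B((E\vee F)\mathcal H)$; (3) $(E\vee F-F)E$ is an invertible operator in $\mathcal B(E\mathcal H,(E\vee F-F)\mathcal H)$. If these conditions hold, then $$\|((E-F)|_{(E\vee F)\mathcal H})^{-1}\|=(1-\|EF\|^2)^{-1/2}=\|[(E\vee F-F)E]^{-1}\|.$$ *)

From HB Require Import structures.
From mathcomp Require Import all_boot all_order all_algebra.
From mathcomp Require Import complex.
From mathcomp Require Import classical_sets reals.
Set Implicit Arguments. Unset Strict Implicit. Unset Printing Implicit Defensive.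
Import Order.TTheory GRing.Theory Num.Theory.
Local Open Scope ring_scope.
Local Open Scope classical_set_scope.

Section Hilbert.
Variables (R : realType) (V : lmodType R[i]) (ip : V -> V -> R[i]).

Definition hnorm (x : V) : R := Num.sqrt (complex.Re (ip x x)).

Definition is_hilbert : Prop :=
  [/\ (forall (a : R[i]) (x y z : V), ip (a *: x + y) z = a * ip x z + ip y z),
      (forall x y : V, ip y x = conjc (ip x y)),
      (forall x : V, complex.Im (ip x x) = 0 /\ 0 <= complex.Re (ip x x)),
      (forall x : V, ip x x = 0 -> x = 0) &
      (forall u : nat -> V,
         (forall e : R, 0 < e -> exists N, forall m n, (N <= m)%N -> (N <= n)%N ->
              hnorm (u m - u n) < e) ->
         exists l : V, forall e : R, 0 < e -> exists N, forall n, (N <= n)%N ->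
              hnorm (u n - l) < e)].

Definition is_bounded_op (T : V -> V) : Prop :=
  (forall (a : R[i]) (x y : V), T (a *: x + y) = a *: T x + T y) /\
  (exists C : R, forall x, hnorm (T x) <= C * hnorm x).

Definition is_projection (E : V -> V) : Prop :=
  [/\ is_bounded_op E, (forall x, E (E x) = E x) &
      (forall x y, ip (E x) y = ip x (E y))].

(** the range E H is the library's [range E] (= E @` setT) *)

Definition hclosure (S : set V) : set V :=
  [set y | forall e : R, 0 < e -> exists z, S z /\ hnorm (y - z) < e].

Definition is_join (E F P : V -> V) : Prop :=
  is_projection P /\
  range P = hclosure [set y | exists a b, y = E a + F b].

Definition is_meet (E F Q : V -> V) : Prop :=
  is_projection Q /\ range Q = range E `&` range F.

(** G is a two-sided inverse, in B(N, M), of the operator T : M -> N,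
    where M, N are (closed) subspaces of V; G is given as a map on V
    whose values only matter on N. *)
Definition is_inverse_between (M N : set V) (T G : V -> V) : Prop :=
  [/\ (forall y, N y -> M (G y)),
      (forall (a : R[i]) y z, N y -> N z -> G (a *: y + z) = a *: G y + G z),
      (exists C : R, forall y, N y -> hnorm (G y) <= C * hnorm y),
      (forall x, M x -> G (T x) = x) &
      (forall y, N y -> T (G y) = y)].

Definition invertible_between (M N : set V) (T : V -> V) : Prop :=
  (forall x, M x -> N (T x)) /\ exists G, is_inverse_between M N T G.

Definition opnorm_on (M : set V) (G : V -> V) : R :=
  sup [set r : R | exists y, [/\ M y, hnorm y <= 1 & r = hnorm (G y)]].

Definition opnorm (G : V -> V) : R := opnorm_on setT G.

End Hilbert.

(* Let c = ‖EF‖ and s = √(1 - c²).  The operators A = E - F and B = E + F - 1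
   are self-adjoint with A² + B² = 1, so ‖Au‖² + ‖Bu‖² = ‖u‖².  On (E∨F)H one
   has ‖Au‖ ≥ s‖u‖: on EH by Pythagoras, since ‖FE‖ = c, and on the part of
   (E∨F)H in ker E by approximating it with vectors E a + F b.  Hence ‖Bu‖ ≤ c‖u‖
   there, and if c < 1 the Neumann series for A² = 1 - B² shows that A, and then
   (E∨F - F)E, is onto; with the lower bound s this gives (2) and (3), with
   inverses of norm at most 1/s.  Conversely, an inverse of norm K of either
   operator gives ‖x‖ ≤ K‖x - Fx‖ on EH, i.e. ‖Fx‖² ≤ (1 - K⁻²)‖x‖², whence
   c² ≤ 1 - K⁻²: so (2) and (3) force c < 1, and when E ≠ 0 the inverse norms
   are exactly 1/s.  Finally (2) gives (1) directly, and (1) gives c < 1 by the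
   open mapping theorem for x ↦ x - Fx from EH onto (E∨F)H ∩ ker F. *)

From HB Require Import structures.
From mathcomp Require Import all_boot all_order all_algebra.
From mathcomp Require Import complex.
From mathcomp Require Import classical_sets reals boolp.
From mathcomp Require Import ring lra.
Import Order.TTheory GRing.Theory Num.Theory.
Local Open Scope ring_scope.
Local Open Scope classical_set_scope.
Set Implicit Arguments. Unset Strict Implicit. Unset Printing Implicit Defensive.

Lemma ler_of_sqr (R : realDomainType) (a b : R) : 0 <= b -> a ^+ 2 <= b ^+ 2 -> a <= b.
Proof. by move=> b0 ab; nra. Qed.

Lemma ler_of_sqr_le_mul (R : realDomainType) (a b k : R) : 0 <= a -> 0 <= b -> 0 <= k ->
  a ^+ 2 <= k * a * b -> a <= k * b.
Proof.
move=> a0 b0 k0 le_ab; have [->|an0] := eqVneq a 0; first by rewrite mulr_ge0.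
have : 0 < a by rewrite lt_def an0 a0.
nra.
Qed.

Lemma ler_bernoulli (R : realDomainType) (d : R) n :
  0 <= d -> 1 + n%:R * d <= (1 + d) ^+ n.
Proof.
move=> d0; elim: n => [|n IHn]; first by rewrite mul0r addr0 expr0.
have dn0 : 0 <= n%:R * d by rewrite mulr_ge0.
have ge1 : 1 <= (1 + d) ^+ n by rewrite exprn_ege1 // lerDl.
rewrite exprS -natr1 mulrDl mul1r; nra.
Qed.

Lemma exists_expr_lt (R : archiRealFieldType) (q e : R) :
  0 <= q < 1 -> 0 < e -> exists n, q ^+ n < e.
Proof.
move=> /andP[q0 q1] e0; have [->|qn0] := eqVneq q 0; first by exists 1%N; rewrite expr1.
have qp : 0 < q by rewrite lt_def qn0 q0.
pose d := q^-1 - 1; have dp : 0 < d by rewrite subr_gt0 invf_gt1.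
pose n := (Num.truncn (e^-1 / d)).+1; exists n.
have lt_n : e^-1 < n%:R * d by rewrite -ltr_pdivrMr // truncnS_gt.
have le_n := ler_bernoulli n (ltW dp).
rewrite [1 + d]addrC subrK exprVn in le_n.
have : e^-1 < (q ^+ n)^-1 by apply: lt_le_trans le_n; lra.
by rewrite ltf_pV2 ?posrE ?exprn_gt0.
Qed.

Lemma subrACA (W : zmodType) (x y z t : W) : (x - y) - (z - t) = (x - z) - (y - t).
Proof. by rewrite !opprB addrACA [in RHS]addrACA (addrC (- z)). Qed.

Section LinearMaps.
Variables (K : pzRingType) (V : lmodType K).

Section OneMap.
Variables (T : V -> V) (linT : linear T).

Lemma lin0 : T 0 = 0.
Proof. by have := linT 1 0 0; rewrite scaler0 addr0 scale1r -{1}[T 0]addr0 => /addrI. Qed.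
Lemma linD x y : T (x + y) = T x + T y.
Proof. by have := linT 1 x y; rewrite !scale1r. Qed.
Lemma linZ a x : T (a *: x) = a *: T x.
Proof. by have := linT a x 0; rewrite !addr0 lin0 addr0. Qed.
Lemma linN x : T (- x) = - T x.
Proof. by rewrite -scaleN1r linZ scaleN1r. Qed.
Lemma linB x y : T (x - y) = T x - T y.
Proof. by rewrite linD linN. Qed.
End OneMap.

Lemma linear_add (T1 T2 : V -> V) : linear T1 -> linear T2 -> linear (fun x => T1 x + T2 x).
Proof. by move=> l1 l2 a x y; rewrite l1 l2 scalerDr addrACA. Qed.
Lemma linear_sub (T1 T2 : V -> V) : linear T1 -> linear T2 -> linear (fun x => T1 x - T2 x).
Proof. by move=> l1 l2 a x y; rewrite l1 l2 scalerBr opprD addrACA. Qed.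
Lemma linear_comp (T1 T2 : V -> V) : linear T1 -> linear T2 -> linear (fun x => T1 (T2 x)).
Proof. by move=> l1 l2 a x y; rewrite l2 l1. Qed.

Definition subspace (M : set V) := M 0 /\ forall a x y, M x -> M y -> M (a *: x + y).

Definition linear_on (M : set V) (G : V -> V) :=
  forall a y z, M y -> M z -> G (a *: y + z) = a *: G y + G z.

Section Subspace.
Variables (M : set V) (subM : subspace M).

Lemma subspace0 : M 0. Proof. by case: subM. Qed.
Lemma subspaceZ a x : M x -> M (a *: x).
Proof. by move=> Mx; rewrite -[_ *: x]addr0; apply: subM.2 => //; apply: subspace0. Qed.
Lemma subspaceD x y : M x -> M y -> M (x + y).
Proof. by move=> Mx My; rewrite -[x]scale1r; apply: subM.2. Qed.
Lemma subspaceB x y : M x -> M y -> M (x - y).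
Proof. by move=> Mx My; rewrite -scaleN1r addrC; apply: subM.2. Qed.

Lemma linear_on0 G : linear_on M G -> G 0 = 0.
Proof.
move=> linG; have := linG 1 0 0 subspace0 subspace0.
by rewrite scaler0 addr0 scale1r -{1}[G 0]addr0 => /addrI.
Qed.
Lemma linear_onZ G a y : linear_on M G -> M y -> G (a *: y) = a *: G y.
Proof.
by move=> linG My; have := linG a y 0 My subspace0; rewrite addr0 linear_on0 // addr0.
Qed.
End Subspace.

Lemma subspaceI (M N : set V) : subspace M -> subspace N -> subspace (M `&` N).
Proof.
move=> [M0 subM] [N0 subN]; split=> // a x y [Mx Nx] [My Ny].
by split; [apply: subM | apply: subN].
Qed.

Lemma range_subspace (T : V -> V) : linear T -> subspace (range T).
Proof.
move=> linT; split; first by exists 0 => //; rewrite lin0.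
by move=> a _ _ [x _ <-] [y _ <-]; exists (a *: x + y); rewrite ?linT.
Qed.

Lemma kernel_subspace (T : V -> V) : linear T -> subspace [set x | T x = 0].
Proof.
move=> linT; split=> [|a x y /= Tx Ty]; first exact: lin0.
by rewrite linT Tx Ty scaler0 addr0.
Qed.
End LinearMaps.

(** * Inner product spaces *)

Lemma Re_realM (R : realType) (a : R) (x : R[i]) : complex.Re ((a%:C)%C * x) = a * complex.Re x.
Proof. by case: x => u v /=; rewrite mul0r subr0. Qed.

Lemma ReD (R : realType) (x y : R[i]) : complex.Re (x + y) = complex.Re x + complex.Re y.
Proof. by case: x; case: y. Qed.

Lemma ReN (R : realType) (x : R[i]) : complex.Re (- x) = - complex.Re x.
Proof. by case: x. Qed.

Lemma Re_conj (R : realType) (x : R[i]) : complex.Re (x^*)%C = complex.Re x.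
Proof. by case: x. Qed.

Section InnerProductSpace.
Variables (R : realType) (V : lmodType R[i]) (ip : V -> V -> R[i]).
Hypothesis hilbV : is_hilbert ip.
Local Notation "`‖ x ‖" := (hnorm ip x) (format "`‖ x ‖").
Local Notation Re := complex.Re.

Lemma ipDl x y z : ip (x + y) z = ip x z + ip y z.
Proof. by case: hilbV => ipl _ _ _ _; have := ipl 1 x y z; rewrite scale1r mul1r. Qed.
Lemma ipZl a x z : ip (a *: x) z = a * ip x z.
Proof.
case: hilbV => ipl _ _ _ _; have := ipl a x 0 z; have := ipl 1 0 0 z.
by rewrite scaler0 addr0 mul1r -{1}[ip 0 z]addr0 => /addrI <-; rewrite !addr0.
Qed.
Lemma ip_conj x y : ip y x = (ip x y)^*%C.
Proof. by case: hilbV. Qed.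

Lemma ip0l z : ip 0 z = 0.
Proof. by rewrite -(scale0r 0) ipZl mul0r. Qed.
Lemma ipNl x z : ip (- x) z = - ip x z.
Proof. by rewrite -scaleN1r ipZl mulN1r. Qed.
Lemma ipBl x y z : ip (x - y) z = ip x z - ip y z.
Proof. by rewrite ipDl ipNl. Qed.
Lemma ip0r z : ip z 0 = 0.
Proof. by rewrite ip_conj ip0l rmorph0. Qed.
Lemma ipDr x y z : ip z (x + y) = ip z x + ip z y.
Proof. by rewrite ip_conj ipDl rmorphD /= -!ip_conj. Qed.
Lemma ipZr a x z : ip z (a *: x) = (a^*)%C * ip z x.
Proof. by rewrite ip_conj ipZl rmorphM /= -ip_conj. Qed.
Lemma ipNr x z : ip z (- x) = - ip z x.
Proof. by rewrite ip_conj ipNl rmorphN /= -ip_conj. Qed.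
Lemma ipBr x y z : ip z (x - y) = ip z x - ip z y.
Proof. by rewrite ipDr ipNr. Qed.
Lemma Re_ipC x y : Re (ip y x) = Re (ip x y).
Proof. by rewrite ip_conj Re_conj. Qed.

Lemma ip_ext x y : (forall z, ip x z = ip y z) -> x = y.
Proof.
case: hilbV => _ _ _ ip_eq0 _ ipxy; apply/eqP; rewrite -subr_eq0; apply/eqP.
by apply: ip_eq0; rewrite ipBl ipxy subrr.
Qed.

Lemma hnorm_ge0 x : 0 <= `‖x‖.
Proof. exact: sqrtr_ge0. Qed.
Lemma hnorm_sqr x : `‖x‖ ^+ 2 = Re (ip x x).
Proof. by rewrite /hnorm sqr_sqrtr //; case: hilbV => _ _ /(_ x)[]. Qed.
Lemma hnorm0 : `‖0‖ = 0.
Proof. by rewrite /hnorm ip0l sqrtr0. Qed.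
Lemma hnorm_eq0 x : `‖x‖ = 0 -> x = 0.
Proof.
move=> nx0; case: hilbV => _ _ /(_ x) [Im0 _] ip_eq0 _; apply: ip_eq0.
have := hnorm_sqr x; rewrite nx0 expr0n /=; move: Im0.
by case: (ip x x) => a b /= -> <-.
Qed.
Lemma hnormN x : `‖- x‖ = `‖x‖.
Proof. by rewrite /hnorm ipNl ipNr opprK. Qed.
Lemma hdistC x y : `‖x - y‖ = `‖y - x‖.
Proof. by rewrite -hnormN opprB. Qed.

Lemma hnormD_sqr x y : `‖x + y‖ ^+ 2 = `‖x‖ ^+ 2 + `‖y‖ ^+ 2 + 2 * Re (ip x y).
Proof. by rewrite !hnorm_sqr !ipDl !ipDr !ReD (Re_ipC x y); ring. Qed.
Lemma hnormB_sqr x y : `‖x - y‖ ^+ 2 = `‖x‖ ^+ 2 + `‖y‖ ^+ 2 - 2 * Re (ip x y).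
Proof. by rewrite hnormD_sqr hnormN ipNr ReN mulrN. Qed.
Lemma hnormZ (t : R) x : `‖(t%:C)%C *: x‖ = `|t| * `‖x‖.
Proof.
apply/eqP; rewrite -(@eqrXn2 _ 2) ?mulr_ge0 ?hnorm_ge0 //.
by rewrite exprMn real_normK ?num_real // !hnorm_sqr ipZl ipZr conjc_real mulrA
  -rmorphM Re_realM expr2.
Qed.
Lemma hnormZ_ge0 (t : R) x : 0 <= t -> `‖(t%:C)%C *: x‖ = t * `‖x‖.
Proof. by move=> t0; rewrite hnormZ ger0_norm. Qed.

Lemma Re_ip_le x y : Re (ip x y) <= `‖x‖ * `‖y‖.
Proof.
apply: ler_of_sqr; first by rewrite mulr_ge0 ?hnorm_ge0.
have [y0|ny0] := eqVneq `‖y‖ 0.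
  by rewrite (hnorm_eq0 y0) ip0r hnorm0 mulr0 expr0n.
have yp : 0 < `‖y‖ ^+ 2 by rewrite exprn_gt0 // lt_def ny0 hnorm_ge0.
pose b := Re (ip x y); pose t := b / `‖y‖ ^+ 2.
have := hnormB_sqr x ((t%:C)%C *: y).
rewrite hnormZ exprMn real_normK ?num_real // ipZr conjc_real Re_realM -/b => e.
have : 0 <= `‖x - (t%:C)%C *: y‖ ^+ 2 by rewrite exprn_ge0 ?hnorm_ge0.
rewrite e /t => ge0.
have e1 : (b / `‖y‖ ^+ 2) ^+ 2 * `‖y‖ ^+ 2 = b ^+ 2 / `‖y‖ ^+ 2 by field.
have e2 : b / `‖y‖ ^+ 2 * b = b ^+ 2 / `‖y‖ ^+ 2 by rewrite mulrAC expr2.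
have : b ^+ 2 / `‖y‖ ^+ 2 <= `‖x‖ ^+ 2 by rewrite e1 e2 in ge0; lra.
by rewrite ler_pdivrMr // exprMn.
Qed.

Lemma ler_hnormD x y : `‖x + y‖ <= `‖x‖ + `‖y‖.
Proof.
apply: ler_of_sqr; first by rewrite addr_ge0 ?hnorm_ge0.
have := Re_ip_le x y; have := hnorm_ge0 x; have := hnorm_ge0 y.
by rewrite hnormD_sqr; nra.
Qed.
Lemma ler_hnormB x y : `‖x - y‖ <= `‖x‖ + `‖y‖.
Proof. by rewrite -(hnormN y) ler_hnormD. Qed.
Lemma ler_hdistD x y z : `‖x - z‖ <= `‖x - y‖ + `‖y - z‖.
Proof. by rewrite -(subrKA y) ler_hnormD. Qed.

Lemma eq_of_hdist_le x y : (forall e, 0 < e -> `‖x - y‖ <= e) -> x = y.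
Proof.
move=> small; apply/eqP; rewrite -subr_eq0; apply/eqP/hnorm_eq0/eqP.
rewrite eq_le hnorm_ge0 andbT; apply/ler_addgt0Pr => e e0; rewrite add0r.
exact: small.
Qed.

Section Projection.
Variables (E : V -> V) (projE : is_projection ip E).

Lemma proj_linear : linear E. Proof. by case: projE => [[]]. Qed.
Lemma proj_idem x : E (E x) = E x. Proof. by case: projE. Qed.
Lemma proj_selfadj x y : ip (E x) y = ip x (E y). Proof. by case: projE. Qed.

Lemma proj_rangeP y : range E y <-> E y = y.
Proof. by split=> [[x _ <-]|Ey]; [rewrite proj_idem | exists y]. Qed.

Lemma ip_proj_orth x y : ip (E x) (y - E y) = 0.
Proof. by rewrite proj_selfadj (linB proj_linear) proj_idem subrr ip0r. Qed.

Lemma hnorm_proj_pythagoras x : `‖x‖ ^+ 2 = `‖E x‖ ^+ 2 + `‖x - E x‖ ^+ 2.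
Proof.
by rewrite -{1}[x](subrK (E x)) (hnormD_sqr (x - E x)) Re_ipC ip_proj_orth /= mulr0 addr0 addrC.
Qed.

Lemma ler_hnorm_proj x : `‖E x‖ <= `‖x‖.
Proof.
apply: ler_of_sqr; first exact: hnorm_ge0.
by rewrite (hnorm_proj_pythagoras x) lerDl exprn_ge0 ?hnorm_ge0.
Qed.

Lemma Re_ip_proj x : Re (ip (E x) x) = `‖E x‖ ^+ 2.
Proof. by rewrite hnorm_sqr -{1}proj_idem proj_selfadj. Qed.

Lemma hnorm_sub_proj_sqr x : `‖x - E x‖ ^+ 2 = `‖x‖ ^+ 2 - `‖E x‖ ^+ 2.
Proof. by rewrite (hnorm_proj_pythagoras x) addrAC subrr add0r. Qed.

Lemma ler_hnorm_sub_proj x : `‖x - E x‖ <= `‖x‖.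
Proof.
apply: ler_of_sqr; first exact: hnorm_ge0.
by rewrite hnorm_sub_proj_sqr gerBl exprn_ge0 ?hnorm_ge0.
Qed.

Lemma hnorm_sub_proj_lb (k : R) x : `‖E x‖ <= k * `‖x‖ ->
  (1 - k ^+ 2) * `‖x‖ ^+ 2 <= `‖x - E x‖ ^+ 2.
Proof.
move=> Exk; rewrite hnorm_sub_proj_sqr.
have := hnorm_ge0 (E x); have := hnorm_ge0 x; nra.
Qed.
End Projection.

Lemma hnorm_proj_proj_sqr A B x : is_projection ip A -> is_projection ip B ->
  `‖A (B x)‖ ^+ 2 <= `‖B (A (B x))‖ * `‖x‖.
Proof.
by move=> projA projB; rewrite -Re_ip_proj // -(proj_selfadj projB) Re_ip_le.
Qed.

(** * Completeness, Baire category and open mapping *)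

Definition hcvg_to (u : nat -> V) (l : V) :=
  forall e, 0 < e -> exists N, forall n, (N <= n)%N -> `‖u n - l‖ < e.

Definition hclosed (A : set V) :=
  forall u l, (forall n, A (u n)) -> hcvg_to u l -> A l.

Lemma hcvg_cst y : hcvg_to (fun=> y) y.
Proof. by move=> e e0; exists 0%N => n _; rewrite subrr hnorm0. Qed.

Lemma hcvg_uniq u l l' : hcvg_to u l -> hcvg_to u l' -> l = l'.
Proof.
move=> ul ul'; apply: eq_of_hdist_le => e e0.
have e2 : 0 < e / 2 by rewrite divr_gt0.
have [N1 uN1] := ul _ e2; have [N2 uN2] := ul' _ e2.
have := uN1 _ (leq_maxl N1 N2); have := uN2 _ (leq_maxr N1 N2).
have := ler_hdistD l (u (maxn N1 N2)) l'; rewrite (hdistC l (u _)); lra.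
Qed.

Lemma hcvg_shift k u l : hcvg_to u l -> hcvg_to (fun n => u (k + n)%N) l.
Proof.
move=> ul e e0; have [N uN] := ul e e0; exists N => n Nn; apply: uN.
exact: leq_trans Nn (leq_addl _ _).
Qed.

Lemma hcvgDl y u l : hcvg_to u l -> hcvg_to (fun n => y + u n) (y + l).
Proof. by move=> ul e /ul[N uN]; exists N => n /uN; rewrite opprD addrACA subrr add0r. Qed.

Lemma hcvgBr y u l : hcvg_to u l -> hcvg_to (fun n => u n - y) (l - y).
Proof. by move=> ul e /ul[N uN]; exists N => n /uN; rewrite opprB addrA subrK. Qed.

Lemma hcvg_linear T (C : R) u l : linear T -> (forall x, `‖T x‖ <= C * `‖x‖) ->
  hcvg_to u l -> hcvg_to (fun n => T (u n)) (T l).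
Proof.
move=> linT boundT ul e e0.
have C1 : 0 < `|C| + 1 by rewrite ltr_wpDl.
have [N uN] := ul _ (divr_gt0 e0 C1); exists N => n /uN ulN.
rewrite -(linB linT); apply: le_lt_trans (boundT _) _.
have Cle : C * `‖u n - l‖ <= (`|C| + 1) * `‖u n - l‖.
  by rewrite ler_wpM2r ?hnorm_ge0 // (le_trans (ler_norm C)) ?lerDl.
by apply: le_lt_trans Cle _; rewrite mulrC -ltr_pdivlMr.
Qed.

Lemma hcvg_hnorm_le u l (B : R) : hcvg_to u l -> (forall n, `‖u n‖ <= B) -> `‖l‖ <= B.
Proof.
move=> ul uB; apply/ler_addgt0Pr => e /ul[N /(_ N (leqnn N))].
have := ler_hdistD l (u N) 0; rewrite !subr0 hdistC; have := uB N; lra.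
Qed.

Lemma hclosedI A B : hclosed A -> hclosed B -> hclosed (A `&` B).
Proof. by move=> clA clB u l uAB ul; split; [apply: clA ul | apply: clB ul] => n; case: (uAB n). Qed.

Lemma hclosed_kernel T (C : R) : linear T -> (forall x, `‖T x‖ <= C * `‖x‖) ->
  hclosed [set x | T x = 0].
Proof.
move=> linT boundT u l Tu0 ul; apply: hcvg_uniq (hcvg_linear linT boundT ul) _.
by under eq_fun do rewrite Tu0; apply: hcvg_cst.
Qed.

Lemma hclosed_range_proj E : is_projection ip E -> hclosed (range E).
Proof.
move=> projE u l uE ul; apply/(proj_rangeP projE).
have boundE x : `‖E x‖ <= 1 * `‖x‖ by rewrite mul1r ler_hnorm_proj.
apply: hcvg_uniq (hcvg_linear (proj_linear projE) boundE ul) _.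
by under eq_fun do rewrite (proj_rangeP projE _).1 //.
Qed.

Section GeometricSeries.
Variables (u : nat -> V) (K q : R).
Hypotheses (K0 : 0 <= K) (q01 : 0 <= q < 1).
Hypothesis u_step : forall n, `‖u n.+1 - u n‖ <= K * q ^+ n.

Let q1 : 0 < 1 - q. Proof. by case/andP: q01 => _; rewrite subr_gt0. Qed.

Lemma geometric_tail n k : `‖u (n + k)%N - u n‖ <= K * q ^+ n / (1 - q).
Proof.
suff tail : `‖u (n + k)%N - u n‖ <= K * (q ^+ n - q ^+ (n + k)) / (1 - q).
  apply: le_trans tail _; apply: ler_wpM2r; first by rewrite invr_ge0 ltW.
  by apply: ler_wpM2l => //; rewrite gerBl exprn_ge0 //; case/andP: q01.
elim: k => [|k IHk]; first by rewrite addn0 !subrr hnorm0 mulr0 mul0r.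
apply: le_trans (ler_hdistD _ (u (n + k)%N) _) _; rewrite addnS.
apply: le_trans (lerD (u_step _) IHk) _; rewrite le_eqVlt; apply/orP; left.
by apply/eqP; rewrite exprS; field; rewrite lt0r_neq0.
Qed.

Lemma hcvg_geometric :
  exists2 l, hcvg_to u l & forall n, `‖l - u n‖ <= K * q ^+ n / (1 - q).
Proof.
have [l ul] : exists l, hcvg_to u l.
  case: hilbV => _ _ _ _; apply=> e e0.
  have K1 : 0 < K + 1 by apply: ltr_wpDl K0 ltr01.
  have [N qN] : exists N, q ^+ N < e * (1 - q) / (K + 1).
    by apply: exists_expr_lt => //; rewrite divr_gt0 ?mulr_gt0.
  have small n : (N <= n)%N -> K * q ^+ n / (1 - q) < e.
    move=> Nn; rewrite ltr_pdivrMr //; apply: (@le_lt_trans _ _ (K * q ^+ N)).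
      by apply: ler_wpM2l => //; case/andP: q01 => q0 /ltW qle1; exact: ler_wiXn2l.
    rewrite ltr_pdivlMr // in qN.
    have qN0 : 0 <= q ^+ N by rewrite exprn_ge0 //; case/andP: q01.
    nra.
  exists N => m n Nm Nn; wlog nm : m n Nm Nn / (n <= m)%N => [hwlog|].
    by case: (leqP n m) => [|/ltnW] nm; [|rewrite hdistC]; apply: hwlog.
  by rewrite -(subnKC nm); apply: le_lt_trans (geometric_tail _ _) (small _ Nn).
exists l => // n; apply: hcvg_hnorm_le (hcvgBr _ (hcvg_shift n ul)) _ => k.
exact: geometric_tail.
Qed.
End GeometricSeries.

Lemma nested_balls Y (y : nat -> V) (r : nat -> R) : hclosed Y -> (forall n, Y (y n)) ->
  (forall n, 0 <= r n) -> (forall n, r n.+1 <= r n / 2) ->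
  (forall n, `‖y n.+1 - y n‖ + r n.+1 <= r n) ->
  exists2 l, Y l & forall n, `‖l - y n‖ <= r n.
Proof.
move=> clY Yy r0 r_half nest.
have r_geo n : r n <= r 0%N * (2^-1) ^+ n.
  elim: n => [|n IHn]; first by rewrite expr0 mulr1.
  by rewrite exprS mulrCA mulrC; apply: le_trans (r_half n) _; rewrite ler_pM2r ?invr_gt0.
have y_step n : `‖y n.+1 - y n‖ <= r 0%N * (2^-1) ^+ n.
  by apply: le_trans (r_geo n); have := nest n; have := r0 n.+1; lra.
have half01 : 0 <= (2^-1 : R) < 1 by apply/andP; split; lra.
have [l yl _] := hcvg_geometric (r0 0%N) half01 y_step.
have nest_far n m : `‖y (n + m)%N - y n‖ + r (n + m)%N <= r n.
  elim: m => [|m IHm]; first by rewrite addn0 subrr hnorm0 add0r.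
  rewrite addnS; apply: le_trans (lerD (ler_hdistD _ (y (n + m)%N) _) (lexx _)) _.
  by have := nest (n + m)%N; lra.
exists l => [|n]; first exact: clY yl.
apply: hcvg_hnorm_le (hcvgBr _ (hcvg_shift n yl)) _ => m.
by have := nest_far n m; have := r0 (n + m)%N; lra.
Qed.

Lemma baire Y (A : nat -> set V) : hclosed Y -> Y !=set0 ->
  (forall y, Y y -> exists k, A k y) ->
  exists k y0 r, [/\ Y y0, 0 < r & forall y, Y y -> `‖y - y0‖ < r -> hclosure ip (A k) y].
Proof.
move=> clY [y00 Yy00] coverY; apply: contrapT => no_ball.
(* Otherwise every ball of Y contains a smaller ball avoiding A k; nesting such
   balls for k = 0, 1, ... yields a point of Y outside every A k. *)
have step (p : nat * V * R) : exists q : V * R, Y p.1.2 -> 0 < p.2 ->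
    [/\ Y q.1, `‖q.1 - p.1.2‖ < p.2, 0 < q.2 & forall z, A p.1.1 z -> q.2 <= `‖q.1 - z‖].
  case: p => [[k y0] r] /=; have [[Yy0 r0]|] := pselect (Y y0 /\ 0 < r); last first.
    by move=> nYr; exists (0, 0) => *; case: nYr.
  have [y [Yy yr /existsNP[e /not_implyP[e0 /forallNP far]]]] :
      exists y, [/\ Y y, `‖y - y0‖ < r & ~ hclosure ip (A k) y].
    apply: contrapT => all_close; apply: no_ball; exists k, y0, r; split=> // y Yy yr.
    by apply: contrapT => ncl; apply: all_close; exists y.
  exists (y, e) => _ _; split=> // z Az; rewrite leNgt; apply/negP => yz.
  by apply: (far z); split.
have [f f_step] := choice step.
pose ball := fix ball n := if n is n'.+1 then
    let p := f (n', (ball n').1, (ball n').2 / 2) in (p.1, Num.min ((ball n').2 / 2) (p.2 / 2))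
  else (y00, 1).
pose y n := (ball n).1; pose r n := (ball n).2.
have Yr n : Y (y n) /\ 0 < r n.
  elim: n => [|n [Yy r0]]; first by split=> //; rewrite /r /=.
  have [] := f_step (n, y n, r n / 2) Yy (divr_gt0 r0 (ltr0Sn _ 1)).
  by rewrite /y /r /= -/(y n) -/(r n) => Yy' _ e0 _; rewrite lt_min !divr_gt0.
have next n : [/\ `‖y n.+1 - y n‖ < r n / 2, r n.+1 <= r n / 2 &
    forall z, A n z -> 2 * r n.+1 <= `‖y n.+1 - z‖].
  have [Yy r0] := Yr n; have [] := f_step (n, y n, r n / 2) Yy (divr_gt0 r0 (ltr0Sn _ 1)).
  rewrite /y /r /= -/(y n) -/(r n) => _ ? _ far; split; rewrite ?ge_min ?lexx //.
  move=> z /far far_z; apply: le_trans _ far_z; by rewrite mulrC -ler_pdivlMr // ge_min lexx orbT.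
have [l Yl near_l] : exists2 l, Y l & forall n, `‖l - y n‖ <= r n.
  apply: nested_balls clY (fun n => (Yr n).1) (fun n => ltW (Yr n).2) _ _.
    by move=> n; case: (next n).
  by move=> n; case: (next n) => ? ? _; lra.
have [k Akl] := coverY l Yl; have [_ _ /(_ l Akl)] := next k.
by rewrite hdistC; have := near_l k.+1; have := (Yr k.+1).2; lra.
Qed.

Section OpenMapping.
Variables (X Y : set V) (T : V -> V).
Hypotheses (subX : subspace X) (subY : subspace Y) (linT : linear T).
Local Notation image_ball b := [set T x | x in [set x | X x /\ `‖x‖ <= b]].

Lemma hclosure_image_ballB a b u v : hclosure ip (image_ball a) u ->
  hclosure ip (image_ball b) v -> hclosure ip (image_ball (a + b)) (u - v).
Proof.
move=> clu clv e e0; have e2 : 0 < e / 2 by rewrite divr_gt0.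
have [_ [[x [Xx xa] <-] ux]] := clu _ e2; have [_ [[x' [Xx' x'b] <-] vx']] := clv _ e2.
exists (T (x - x')); split.
  exists (x - x') => //; split; first exact: subspaceB.
  by apply: le_trans (ler_hnormB _ _) _; apply: lerD.
rewrite (linB linT) subrACA; apply: le_lt_trans (ler_hnormB _ _) _; lra.
Qed.

Lemma hclosure_image_ballZ (t : R) b y : 0 < t ->
  hclosure ip (image_ball b) y -> hclosure ip (image_ball (t * b)) ((t%:C)%C *: y).
Proof.
move=> t0 cly e e0; have [_ [[x [Xx xb] <-] yx]] := cly _ (divr_gt0 e0 t0).
exists (T ((t%:C)%C *: x)); split.
  exists ((t%:C)%C *: x) => //; split; first exact: subspaceZ.
  by rewrite (hnormZ_ge0 _ (ltW t0)) ler_pM2l.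
by rewrite (linZ linT) -scalerBr (hnormZ_ge0 _ (ltW t0)) mulrC -ltr_pdivlMr.
Qed.

Lemma open_mapping_approx : hclosed Y -> (forall y, Y y -> exists2 x, X x & T x = y) ->
  exists2 L, 0 <= L & forall y, Y y -> hclosure ip (image_ball (L * `‖y‖)) y.
Proof.
move=> clY ontoT.
have [k [y0 [r [Yy0 r0 near_y0]]]] : exists k y0 r, [/\ Y y0, 0 < r &
    forall y, Y y -> `‖y - y0‖ < r -> hclosure ip (image_ball k%:R) y].
  apply: baire clY _ _; first by exists 0; case: subY.
  move=> y /ontoT[x Xx <-]; exists (Num.truncn `‖x‖).+1.
  by exists x => //; split=> //; apply/ltW/truncnS_gt.
have small y : Y y -> `‖y‖ < r -> hclosure ip (image_ball (k%:R + k%:R)) y.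
  move=> Yy yr; have -> : y = (y0 + y) - y0 by rewrite addrC addKr.
  apply: hclosure_image_ballB; apply: near_y0; rewrite ?subrr ?hnorm0 //.
    exact: subspaceD.
  by rewrite addrC addKr.
exists (4 * k%:R / r) => [|y Yy]; first by rewrite divr_ge0 ?mulr_ge0 // ltW.
have [y0n|yn0] := eqVneq `‖y‖ 0.
  rewrite (hnorm_eq0 y0n) => e e0; exists 0; split; last by rewrite subrr hnorm0.
  by exists 0; rewrite ?lin0 //; split; [case: subX | rewrite hnorm0 mulr0].
have yp : 0 < `‖y‖ by rewrite lt_def yn0 hnorm_ge0.
pose t := 2 * `‖y‖ / r; have t0 : 0 < t by rewrite !mulr_gt0 ?invr_gt0.
have -> : 4 * k%:R / r * `‖y‖ = t * (k%:R + k%:R) by rewrite /t; field; rewrite lt0r_neq0.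
have -> : y = (t%:C)%C *: ((t^-1%:C)%C *: y).
  by rewrite scalerA -rmorphM mulfV ?lt0r_neq0 // scale1r.
have tV0 : 0 <= t^-1 by rewrite invr_ge0 ltW.
apply: hclosure_image_ballZ t0 (small _ (subspaceZ subY _ Yy) _).
rewrite (hnormZ_ge0 _ tV0) /t.
have -> : (2 * `‖y‖ / r)^-1 * `‖y‖ = r / 2 by field; rewrite yn0 lt0r_neq0.
lra.
Qed.

Lemma approx_choice (L : R) : (forall y, Y y -> hclosure ip (image_ball (L * `‖y‖)) y) ->
  exists g : V -> R -> V, forall y e, Y y -> 0 < e ->
    [/\ X (g y e), `‖g y e‖ <= L * `‖y‖ & `‖y - T (g y e)‖ < e].
Proof.
move=> approxT.
have step (p : V * R) : exists x, Y p.1 -> 0 < p.2 ->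
    [/\ X x, `‖x‖ <= L * `‖p.1‖ & `‖p.1 - T x‖ < p.2].
  have [[Yy e0]|nYe] := pselect (Y p.1 /\ 0 < p.2); last by exists 0 => Yy e0; case: nYe.
  by have [_ [[x [Xx xL] <-] yx]] := approxT _ Yy _ e0; exists x.
have [g gP] := choice step.
by exists (fun y e => g (y, e)) => y e; apply: (gP (y, e)).
Qed.

Lemma open_mapping_exact (C L : R) : hclosed X -> (forall x, `‖T x‖ <= C * `‖x‖) ->
  (forall x, X x -> Y (T x)) -> 0 <= L ->
  (forall y, Y y -> hclosure ip (image_ball (L * `‖y‖)) y) ->
  forall y, Y y -> exists2 x, X x /\ `‖x‖ <= 2 * L * `‖y‖ & T x = y.
Proof.
move=> clX boundT mapsT L0 approxT y Yy.
have [y0|yn0] := eqVneq `‖y‖ 0.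
  exists 0; last by rewrite (hnorm_eq0 y0) lin0.
  by rewrite hnorm0 y0 mulr0; split=> //; case: subX.
have yp : 0 < `‖y‖ by rewrite lt_def yn0 hnorm_ge0.
have [g gP] := approx_choice approxT.
pose q : R := 2^-1; have q01 : 0 <= q < 1 by apply/andP; split; rewrite /q; lra.
pose eps n := `‖y‖ * q ^+ n; have eps0 n : 0 < eps n by rewrite mulr_gt0 ?exprn_gt0 ?invr_gt0.
pose z := fix z n := if n is n'.+1 then z n' - T (g (z n') (eps n)) else y.
pose x n := g (z n) (eps n.+1).
have zP n : Y (z n) /\ `‖z n‖ <= eps n.
  elim: n => [|n [Yz zn]]; first by rewrite /eps expr0 mulr1.
  have [Xx _ /ltW] := gP _ _ Yz (eps0 n.+1); split=> //.
  by apply: subspaceB => //; apply: mapsT.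
have xP n : X (x n) /\ `‖x n‖ <= L * `‖y‖ * q ^+ n.
  have [Yz zn] := zP n; have [Xx xn _] := gP _ _ Yz (eps0 n.+1); split=> //.
  by apply: le_trans xn _; rewrite -mulrA ler_wpM2l.
pose S := fix S n := if n is n'.+1 then S n' + x n' else 0.
have S_step n : `‖S n.+1 - S n‖ <= L * `‖y‖ * q ^+ n.
  by rewrite /= addrAC subrr add0r; case: (xP n).
have TS n : T (S n) = y - z n.
  elim: n => [|n IHn]; first by rewrite /= (lin0 linT) subrr.
  by rewrite /= (linD linT) IHn opprB addrA addrAC.
have [s Ss s_tail] := hcvg_geometric (mulr_ge0 L0 (ltW yp)) q01 S_step.
exists s; first split.
- apply: clX Ss; elim=> [|n IHn]; first by case: subX.
  by rewrite /=; apply: subspaceD => //; case: (xP n).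
- have := s_tail 0%N; rewrite subr0 expr0 mulr1 /q.
  by have -> : L * `‖y‖ / (1 - 2^-1) = 2 * L * `‖y‖ by field.
apply: hcvg_uniq (hcvg_linear linT boundT Ss) _.
move=> e e0; have [N qN] := exists_expr_lt q01 (divr_gt0 e0 yp); exists N => n Nn.
rewrite TS addrAC subrr add0r hnormN; apply: le_lt_trans (zP n).2 _.
rewrite /eps mulrC -ltr_pdivlMr //; apply: le_lt_trans qN.
by apply: ler_wiXn2l Nn; rewrite /q; lra.
Qed.

Lemma bounded_below_of_bijective (C : R) : hclosed X -> hclosed Y ->
  (forall x, `‖T x‖ <= C * `‖x‖) -> (forall x, X x -> Y (T x)) ->
  (forall y, Y y -> exists2 x, X x & T x = y) -> (forall x, X x -> T x = 0 -> x = 0) ->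
  exists K, forall x, X x -> `‖x‖ <= K * `‖T x‖.
Proof.
move=> clX clY boundT mapsT ontoT injT.
have [L L0 approxT] := open_mapping_approx clY ontoT.
exists (2 * L) => x Xx.
have [x' [Xx' x'le] Tx'] := open_mapping_exact clX boundT mapsT L0 approxT (mapsT _ Xx).
suff x'x : x' = x by rewrite -x'x in x'le *.
apply/eqP; rewrite -subr_eq0; apply/eqP/injT; first exact: subspaceB.
by rewrite (linB linT) Tx' subrr.
Qed.
End OpenMapping.

(** * Operator norms and bounded inverses *)

Section OperatorNorm.
Variables (M : set V) (G : V -> V) (C : R).
Hypotheses (M0 : M 0) (boundG : forall y, M y -> `‖G y‖ <= C * `‖y‖).
Local Notation opnorm_set := [set r | exists y, [/\ M y, `‖y‖ <= 1 & r = `‖G y‖]].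

Let opnorm_set_G0 : opnorm_set `‖G 0‖.
Proof. by exists 0; rewrite hnorm0. Qed.

Let has_sup_opnorm_set : has_sup opnorm_set.
Proof.
split; first by exists `‖G 0‖.
exists `|C| => _ [y [My y1 ->]]; apply: le_trans (boundG My) _.
apply: le_trans (ler_wpM2r (hnorm_ge0 _) (ler_norm C)) _.
by rewrite -[X in _ <= X]mulr1 ler_wpM2l.
Qed.

Lemma opnorm_on_ge0 : 0 <= opnorm_on ip M G.
Proof. exact: le_trans (hnorm_ge0 _) (sup_upper_bound has_sup_opnorm_set opnorm_set_G0). Qed.

Lemma opnorm_on_le k : 0 <= k -> (forall y, M y -> `‖G y‖ <= k * `‖y‖) ->
  opnorm_on ip M G <= k.
Proof.
move=> k0 boundk; apply: ge_sup => [|_ [y [My y1 ->]]]; first by exists `‖G 0‖.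
by apply: le_trans (boundk _ My) _; rewrite -[X in _ <= X]mulr1 ler_wpM2l.
Qed.

Lemma opnorm_on_ub : subspace M -> linear_on M G ->
  forall y, M y -> `‖G y‖ <= opnorm_on ip M G * `‖y‖.
Proof.
move=> subM linG y My; have [y0|yn0] := eqVneq `‖y‖ 0.
  by rewrite (hnorm_eq0 y0) (linear_on0 subM linG) hnorm0 mulr0.
have yp : 0 < `‖y‖ by rewrite lt_def yn0 hnorm_ge0.
have yV0 : 0 <= `‖y‖^-1 by rewrite invr_ge0 ltW.
have unit_y : opnorm_set `‖G (((`‖y‖^-1)%:C)%C *: y)‖.
  exists (((`‖y‖^-1)%:C)%C *: y); split=> //; first exact: subspaceZ.
  by rewrite (hnormZ_ge0 _ yV0) mulVf.
have := sup_upper_bound has_sup_opnorm_set unit_y.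
rewrite (linear_onZ subM _ linG My) (hnormZ_ge0 _ yV0) => /(ler_wpM2r (ltW yp)).
by rewrite mulrAC mulVf ?mul1r // lt0r_neq0.
Qed.
End OperatorNorm.

Lemma inverse_between_of_bounded_below M N T (m : R) : linear T -> subspace M ->
  subspace N -> (forall x, M x -> N (T x)) -> 0 < m ->
  (forall x, M x -> m * `‖x‖ <= `‖T x‖) -> (forall y, N y -> exists2 x, M x & T x = y) ->
  exists G, is_inverse_between ip M N T G.
Proof.
move=> linT subM subN mapsT m0 lowT ontoT.
have preimage y : exists x, N y -> M x /\ T x = y.
  have [/ontoT[x Mx Txy]|nNy] := pselect (N y); first by exists x.
  by exists 0 => /nNy.
have [G GP] := choice preimage.
have injT x x' : M x -> M x' -> T x = T x' -> x = x'.
  move=> Mx Mx' Txx'; apply/eqP; rewrite -subr_eq0; apply/eqP/hnorm_eq0/eqP.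
  rewrite eq_le hnorm_ge0 andbT -(pmulr_rle0 _ m0).
  by apply: le_trans (lowT _ (subspaceB subM Mx Mx')) _; rewrite (linB linT) Txx' subrr hnorm0.
exists G; split.
- by move=> y /GP[].
- move=> a y z Ny Nz; have [My TGy] := GP y Ny; have [Mz TGz] := GP z Nz.
  have Nayz : N (a *: y + z) by apply: subN.2.
  apply: injT; [exact: (GP _ Nayz).1 | exact: subM.2 | by rewrite (GP _ Nayz).2 linT TGy TGz].
- exists m^-1 => y Ny; have [My TGy] := GP y Ny.
  by rewrite mulrC ler_pdivlMr // mulrC -{2}TGy lowT.
- by move=> x Mx; apply: injT; [exact: (GP _ (mapsT _ Mx)).1 | | exact: (GP _ (mapsT _ Mx)).2].
- by move=> y /GP[].
Qed.

(** * Two projections *)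

Section TwoProjections.
Variables (E F P : V -> V).
Hypotheses (projE : is_projection ip E) (projF : is_projection ip F).
Hypothesis joinP : is_join ip E F P.

Let projP : is_projection ip P := joinP.1.
Let linE := proj_linear projE.
Let linF := proj_linear projF.
Let linP := proj_linear projP.

Lemma join_fixes_sums a b : P (E a + F b) = E a + F b.
Proof.
apply/(proj_rangeP projP); rewrite joinP.2 => e e0.
by exists (E a + F b); split; [exists a, b | rewrite subrr hnorm0].
Qed.

Lemma join_projE x : P (E x) = E x.
Proof. by have := join_fixes_sums x 0; rewrite (lin0 linF) !addr0. Qed.
Lemma join_projF x : P (F x) = F x.
Proof. by have := join_fixes_sums 0 x; rewrite (lin0 linE) !add0r. Qed.

Lemma proj_joinF x : F (P x) = F x.
Proof.
apply: ip_ext => z.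
by rewrite (proj_selfadj projF) (proj_selfadj projP) join_projF -(proj_selfadj projF).
Qed.

Lemma join_approx u : P u = u -> forall e, 0 < e -> exists a b, `‖u - (E a + F b)‖ < e.
Proof.
move=> Pu e e0; have : range P u by exists u.
by rewrite joinP.2 => /(_ e e0) [_ [[a [b ->]] ue]]; exists a, b.
Qed.

Local Notation c := (opnorm ip (fun x => E (F x))).
Local Notation s := (Num.sqrt (1 - c ^+ 2)).

Let EF_bound x : setT x -> `‖E (F x)‖ <= 1 * `‖x‖.
Proof.
by move=> _; rewrite mul1r; apply: le_trans (ler_hnorm_proj projE _) (ler_hnorm_proj projF _).
Qed.

Lemma c_ge0 : 0 <= c.
Proof. exact: opnorm_on_ge0 EF_bound. Qed.

Lemma c_le t : 0 <= t -> (forall x, `‖E (F x)‖ <= t * `‖x‖) -> c <= t.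
Proof. by move=> t0 boundt; apply: opnorm_on_le. Qed.

Lemma c_le1 : c <= 1.
Proof. by apply: c_le => // x; apply: EF_bound. Qed.

Lemma hnormEF_le x : `‖E (F x)‖ <= c * `‖x‖.
Proof.
apply: (opnorm_on_ub (C := 1)) => // a y z _ _.
exact: (linear_comp linE linF).
Qed.

Lemma hnormFE_le w : E w = w -> `‖F w‖ <= c * `‖w‖.
Proof.
move=> Ew; apply: ler_of_sqr_le_mul; rewrite ?hnorm_ge0 ?c_ge0 //.
have := hnorm_proj_proj_sqr w projF projE; rewrite Ew => /le_trans; apply.
apply: ler_wpM2r; first exact: hnorm_ge0.
by rewrite -{1}(proj_idem projF w) hnormEF_le.
Qed.

Lemma c_le_of_rangeE t : 0 <= t -> (forall w, E w = w -> `‖F w‖ <= t * `‖w‖) -> c <= t.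
Proof.
move=> t0 boundt; apply: c_le => // y; apply: ler_of_sqr_le_mul; rewrite ?hnorm_ge0 //.
apply: le_trans (hnorm_proj_proj_sqr y projE projF) _.
by apply: ler_wpM2r; rewrite ?hnorm_ge0 // boundt // (proj_idem projE).
Qed.

Lemma s_sqr : s ^+ 2 = 1 - c ^+ 2.
Proof. by rewrite sqr_sqrtr // subr_ge0 expr_le1 ?c_ge0 ?c_le1. Qed.

Lemma s_mul_le_of_sqr a b : 0 <= b -> (1 - c ^+ 2) * a ^+ 2 <= b ^+ 2 -> s * a <= b.
Proof. by move=> b0 ab; apply: ler_of_sqr => //; rewrite exprMn s_sqr. Qed.

Lemma s_le1 : s <= 1.
Proof. by apply: ler_of_sqr; rewrite // s_sqr expr1n gerBl exprn_ge0 ?c_ge0. Qed.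

Lemma s_gt0 : c < 1 -> 0 < s.
Proof. by move=> c1; rewrite sqrtr_gt0 subr_gt0 expr_lt1 ?c_ge0. Qed.

Lemma rangeE_lb x : E x = x -> (1 - c ^+ 2) * `‖x‖ ^+ 2 <= `‖x - F x‖ ^+ 2.
Proof. by move=> Ex; exact: (hnorm_sub_proj_lb projF (hnormFE_le Ex)). Qed.

Lemma rangeF_kerE_lb w : F w = w -> s * `‖w - E w‖ <= `‖F (w - E w)‖.
Proof.
move=> Fw; pose z := w - E w.
have sw : s * `‖w‖ <= `‖z‖.
  apply: s_mul_le_of_sqr; rewrite ?hnorm_ge0 //.
  by apply: (hnorm_sub_proj_lb projE); rewrite -{1}Fw hnormEF_le.
have zw : `‖z‖ ^+ 2 <= `‖F z‖ * `‖w‖.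
  have zEw : ip z (E w) = 0 by rewrite ip_conj ip_proj_orth // conjc0.
  rewrite hnorm_sqr {2}/z ipBr zEw subr0 -{1}Fw -(proj_selfadj projF).
  exact: Re_ip_le.
rewrite -/z; have s0 := sqrtr_ge0 (1 - c ^+ 2); have w0 := hnorm_ge0 w.
have Fz0 := hnorm_ge0 (F z); have [->|zn0] := eqVneq `‖z‖ 0; first by rewrite mulr0.
have : 0 < `‖z‖ by rewrite lt_def zn0 hnorm_ge0.
nra.
Qed.

Lemma join_kerE_lb u : P u = u -> s * `‖u - E u‖ <= `‖F (u - E u)‖.
Proof.
(* Approximate u by y = E a + F b, whose component y - E y = F b - E (F b) is
   covered by rangeF_kerE_lb. *)
move=> Pu; apply/ler_addgt0Pr => e e0.
have [a [b uy]] := join_approx Pu (divr_gt0 e0 (ltr0Sn _ 1)).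
set y := E a + F b in uy; set z := u - E u; pose z2 := F b - E (F b).
have near : `‖z - z2‖ <= `‖u - y‖.
  have -> : z2 = y - E y by rewrite /y (linD linE) (proj_idem projE) opprD addrACA subrr add0r.
  by rewrite /z subrACA -(linB linE) ler_hnorm_sub_proj.
have lb2 : s * `‖z2‖ <= `‖F z2‖ by rewrite rangeF_kerE_lb ?(proj_idem projF).
have z_le : `‖z‖ <= `‖z2‖ + `‖z - z2‖.
  by have := ler_hdistD z z2 0; rewrite !subr0 addrC.
have Fz2_le : `‖F z2‖ <= `‖F z‖ + `‖z - z2‖.
  have := ler_hdistD (F z2) (F z) 0; rewrite !subr0 -(linB linF) addrC => /le_trans; apply.
  by rewrite lerD2l hdistC ler_hnorm_proj.
have := s_le1; have := sqrtr_ge0 (1 - c ^+ 2); have := hnorm_ge0 (z - z2); nra.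
Qed.

Lemma join_lb u : P u = u -> (1 - c ^+ 2) * `‖u‖ ^+ 2 <= `‖E u - F u‖ ^+ 2.
Proof.
move=> Pu; pose p := E u - F (E u); pose r := F (u - E u).
have -> : E u - F u = p - r by rewrite /p /r (linB linF) opprB addrA subrK.
have pr0 : Re (ip p r) = 0.
  by rewrite /r -(proj_selfadj projF) /p (linB linF) (proj_idem projF) subrr ip0l.
rewrite hnormB_sqr pr0 mulr0 subr0 (hnorm_proj_pythagoras projE u) mulrDr.
apply: lerD; first by apply: rangeE_lb; rewrite (proj_idem projE).
rewrite -s_sqr -exprMn ler_sqr ?nnegrE ?mulr_ge0 ?sqrtr_ge0 ?hnorm_ge0 //.
exact: join_kerE_lb.
Qed.

Let A u := E u - F u.
Let B u := E u + F u - u.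
Let A_linear : linear A. Proof. exact: linear_sub. Qed.
Let B_linear : linear B. Proof. exact: linear_sub (linear_add linE linF) (fun _ _ _ => erefl). Qed.

Lemma diff_selfadj x y : ip (A x) y = ip x (A y).
Proof. by rewrite ipBl ipBr (proj_selfadj projE) (proj_selfadj projF). Qed.
Lemma sum_selfadj x y : ip (B x) y = ip x (B y).
Proof. by rewrite ipBl ipBr ipDl ipDr (proj_selfadj projE) (proj_selfadj projF). Qed.

Lemma diff_sqr_add_sum_sqr u : A (A u) + B (B u) = u.
Proof.
have AA : A (A u) = (E u + F u) - (E (F u) + F (E u)).
  by rewrite /A (linB linE) (linB linF) !proj_idem // opprB addrACA -opprD.
have BB : B (B u) = (E (F u) + F (E u)) - (E u + F u - u).
  rewrite /B (linB linE) (linB linF) (linD linE) (linD linF) !proj_idem //.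
  by rewrite [E u + _ - _]addrAC subrr add0r addrK.
by rewrite AA BB addrA subrK opprB addrC subrK.
Qed.

Lemma hnorm_diff_sum_sqr u : `‖A u‖ ^+ 2 + `‖B u‖ ^+ 2 = `‖u‖ ^+ 2.
Proof.
by rewrite !hnorm_sqr diff_selfadj sum_selfadj -ReD -ipDr diff_sqr_add_sum_sqr.
Qed.

Lemma hnorm_sum_le u : `‖B u‖ <= 1 * `‖u‖.
Proof.
rewrite mul1r; apply: ler_of_sqr; first exact: hnorm_ge0.
by rewrite -(hnorm_diff_sum_sqr u) lerDr exprn_ge0 ?hnorm_ge0.
Qed.

Lemma join_diff u : P u = u -> P (A u) = A u.
Proof. by move=> Pu; rewrite /A (linB linP) join_projE join_projF. Qed.
Lemma join_sum u : P u = u -> P (B u) = B u.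
Proof. by move=> Pu; rewrite /B (linB linP) (linD linP) join_projE join_projF Pu. Qed.

Lemma join_hnorm_sum_le u : P u = u -> `‖B u‖ <= c * `‖u‖.
Proof.
move=> Pu; apply: ler_of_sqr; first by rewrite mulr_ge0 ?c_ge0 ?hnorm_ge0.
have := hnorm_diff_sum_sqr u; have := join_lb Pu; rewrite /A exprMn; lra.
Qed.

Lemma join_diff_onto : c < 1 -> forall y, P y = y -> exists2 t, P t = t & A t = y.
Proof.
(* Neumann series: iterate x |-> y + B (B x), whose limit l gives A (A l) = y. *)
move=> c1 y Py; pose BB := fun x => B (B x).
have linBB : linear BB by apply: linear_comp B_linear B_linear.
have boundBB x : `‖BB x‖ <= 1 * `‖x‖.
  by apply: le_trans (hnorm_sum_le _) _; rewrite mul1r hnorm_sum_le.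
pose x := fix x n := if n is n'.+1 then y + BB (x n') else 0.
have xS n : x n.+1 = y + BB (x n) by [].
have Px n : P (x n) = x n.
  by elim: n => [|n IHn] /=; rewrite ?(lin0 linP) // (linD linP) Py !join_sum.
have x_step n : `‖x n.+1 - x n‖ <= `‖y‖ * (c ^+ 2) ^+ n.
  elim: n => [|n IHn]; first by rewrite /= (lin0 linBB) addr0 subr0 expr0 mulr1.
  have Pd : P (x n.+1 - x n) = x n.+1 - x n by rewrite (linB linP) !Px.
  rewrite (xS n.+1) {2}(xS n) opprD addrACA subrr add0r -(linB linBB).
  apply: le_trans (join_hnorm_sum_le (join_sum Pd)) _; rewrite exprS mulrCA expr2.
  rewrite -mulrA; apply: ler_wpM2l; first exact: c_ge0.
  by apply: le_trans (join_hnorm_sum_le Pd) _; apply: ler_wpM2l; first exact: c_ge0.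
have c2 : 0 <= c ^+ 2 < 1 by rewrite exprn_ge0 ?c_ge0 // expr_lt1 ?c_ge0.
have [l xl _] := hcvg_geometric (hnorm_ge0 y) c2 x_step.
have Pl : P l = l by apply/(proj_rangeP projP)/(hclosed_range_proj projP _ xl) => n; exists (x n).
have fix_l : l = y + BB l.
  apply: hcvg_uniq (hcvg_shift 1 xl) _.
  exact: hcvgDl (hcvg_linear linBB boundBB xl).
exists (A l); first exact: join_diff Pl.
by apply: (addIr (BB l)); rewrite diff_sqr_add_sum_sqr {1}fix_l addrC.
Qed.

Lemma c_sqr_le_of_bound K : 1 <= K -> (forall x, E x = x -> `‖x‖ <= K * `‖x - F x‖) ->
  c ^+ 2 <= 1 - (K ^+ 2)^-1.
Proof.
move=> K1 boundK; have K0 : 0 < K by apply: lt_le_trans K1.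
have K2 : 0 < K ^+ 2 by rewrite exprn_gt0.
have t0 : 0 <= 1 - (K ^+ 2)^-1 by rewrite subr_ge0 invf_le1 ?exprn_ege1.
rewrite -(sqr_sqrtr t0) ler_sqr ?nnegrE ?c_ge0 ?sqrtr_ge0 //.
apply: c_le_of_rangeE; first exact: sqrtr_ge0.
move=> w Ew; apply: ler_of_sqr; first by rewrite mulr_ge0 ?sqrtr_ge0 ?hnorm_ge0.
have le_w : `‖w‖ ^+ 2 / K ^+ 2 <= `‖w‖ ^+ 2 - `‖F w‖ ^+ 2.
  rewrite ler_pdivrMr // -(hnorm_sub_proj_sqr projF) mulrC -exprMn.
  by rewrite ler_sqr ?nnegrE ?mulr_ge0 ?hnorm_ge0 ?(ltW K0) // boundK.
by rewrite exprMn (sqr_sqrtr t0) mulrBl mul1r (mulrC _ (`‖w‖ ^+ 2)); lra.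
Qed.

Lemma c_lt1_of_bound K : (forall x, E x = x -> `‖x‖ <= K * `‖x - F x‖) -> c < 1.
Proof.
move=> boundK; pose K' := `|K| + 1; have K'1 : 1 <= K' by rewrite lerDr.
have boundK' x : E x = x -> `‖x‖ <= K' * `‖x - F x‖.
  move=> Ex; apply: le_trans (boundK x Ex) _; apply: ler_wpM2r; first exact: hnorm_ge0.
  by rewrite (le_trans (ler_norm K)) ?lerDl.
have := c_sqr_le_of_bound K'1 boundK'.
have : 0 < (K' ^+ 2)^-1 by rewrite invr_gt0 exprn_gt0 // (lt_le_trans ltr01).
have := c_ge0; nra.
Qed.

(* Both operators of (2) and (3) act on E H as x |-> x - F x. *)
Let subF_on_rangeE (M : set V) (T : V -> V) := forall x, E x = x -> M x /\ T x = x - F x.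

Lemma rangeE_bound_of_inverse M N T G K : subF_on_rangeE M T ->
  is_inverse_between ip M N T G -> (forall x, M x -> N (T x)) ->
  (forall y, N y -> `‖G y‖ <= K * `‖y‖) -> forall x, E x = x -> `‖x‖ <= K * `‖x - F x‖.
Proof.
move=> subF_T [_ _ _ GT _] mapsT boundG x /subF_T[Mx Tx].
by have := boundG _ (mapsT _ Mx); rewrite GT // Tx.
Qed.

Lemma c_lt1_of_invertible M N T : subF_on_rangeE M T -> invertible_between ip M N T -> c < 1.
Proof.
move=> subF_T [mapsT [G invG]]; have [_ _ [K boundG] _ _] := invG.
exact: c_lt1_of_bound (rangeE_bound_of_inverse subF_T invG mapsT boundG).
Qed.

Lemma opnorm_inverse M N T G : c < 1 -> (exists x, E x != 0) -> subspace N ->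
  (forall x, M x -> N (T x)) -> is_inverse_between ip M N T G ->
  (forall x, M x -> s * `‖x‖ <= `‖T x‖) -> subF_on_rangeE M T ->
  opnorm_on ip N G = s^-1.
Proof.
move=> c1 [x0 Ex0] subN mapsT invG lbT subF_T; have [mapsG linG [C boundG] _ TG] := invG.
have s0 := s_gt0 c1.
apply/eqP; rewrite eq_le; apply/andP; split.
  apply: opnorm_on_le; rewrite ?invr_ge0 ?(ltW s0) //; first by case: subN.
  by move=> y Ny; rewrite ler_pdivlMl //; have := lbT _ (mapsG _ Ny); rewrite TG.
pose g := opnorm_on ip N G.
have boundg := rangeE_bound_of_inverse subF_T invG mapsT (opnorm_on_ub subN.1 boundG subN linG).
pose x1 := E x0; have Ex1 : E x1 = x1 by rewrite /x1 (proj_idem projE).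
have x1_gt0 : 0 < `‖x1‖ by rewrite lt_def hnorm_ge0 andbT; apply/eqP => /hnorm_eq0/eqP; apply/negP.
have g1 : 1 <= g.
  have := boundg _ Ex1; have := ler_hnorm_sub_proj projF x1.
  have := opnorm_on_ge0 subN.1 boundG; rewrite -/g; nra.
have gVs : g^-1 <= s.
  apply: ler_of_sqr; first exact: sqrtr_ge0.
  by have := c_sqr_le_of_bound g1 boundg; rewrite s_sqr exprVn; lra.
have g0 : 0 < g by apply: lt_le_trans g1.
by rewrite -/g -(invrK g) lef_pV2 ?posrE ?invr_gt0.
Qed.

Let PFE x := P (E x) - F (E x).
Let PFH := range (fun x => P x - F x).

Let PFE_linear : linear PFE.
Proof. by move=> a x y; rewrite /PFE linE linP linF scalerBr opprD addrACA. Qed.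
Let PH_subspace : subspace (range P). Proof. exact: range_subspace. Qed.
Let PFH_subspace : subspace PFH. Proof. exact: range_subspace (linear_sub linP linF). Qed.

Let maps_diff x : range P x -> range P (A x).
Proof. by move/(proj_rangeP projP) => Px; apply/(proj_rangeP projP)/join_diff. Qed.
Let maps_PFE x : range E x -> PFH (PFE x). Proof. by exists (E x). Qed.

Let join_diff_lb x : range P x -> s * `‖x‖ <= `‖A x‖.
Proof.
move/(proj_rangeP projP) => Px; apply: s_mul_le_of_sqr; first exact: hnorm_ge0.
exact: join_lb.
Qed.
Let rangeE_PFE_lb x : range E x -> s * `‖x‖ <= `‖PFE x‖.
Proof.
move/(proj_rangeP projE) => Ex; rewrite /PFE join_projE Ex.
by apply: s_mul_le_of_sqr; [exact: hnorm_ge0 | exact: rangeE_lb].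
Qed.

Lemma invertible_join_of_c_lt1 : c < 1 -> invertible_between ip (range P) (range P) A.
Proof.
move=> c1; split=> //; apply: (inverse_between_of_bounded_below A_linear PH_subspace
  PH_subspace maps_diff (s_gt0 c1) join_diff_lb).
move=> y /(proj_rangeP projP) /(join_diff_onto c1)[t Pt Aty].
by exists t => //; apply/(proj_rangeP projP).
Qed.

Lemma invertible_rangeE_of_c_lt1 : c < 1 -> invertible_between ip (range E) PFH PFE.
Proof.
move=> c1; split=> //; apply: (inverse_between_of_bounded_below PFE_linear
  (range_subspace linE) PFH_subspace maps_PFE (s_gt0 c1) rangeE_PFE_lb).
move=> _ [v _ <-]; have [t Pt Atv] := join_diff_onto c1 (proj_idem projP v).
exists (E t); first by exists t.
have FAt : F (E t) - F t = F v.
  by rewrite -(proj_idem projF t) -(linB linF) -/(A t) Atv proj_joinF.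
by rewrite /PFE (proj_idem projE) join_projE -FAt -Atv /A opprB addrA subrK.
Qed.

Let subF_join : subF_on_rangeE (range P) A.
Proof. by move=> x Ex; split; [apply/(proj_rangeP projP); rewrite -Ex join_projE | rewrite /A Ex]. Qed.

Let subF_rangeE : subF_on_rangeE (range E) PFE.
Proof. by move=> x Ex; split; [exists x | rewrite /PFE join_projE Ex]. Qed.

Lemma c_lt1_of_invertible_join : invertible_between ip (range P) (range P) A -> c < 1.
Proof. exact: c_lt1_of_invertible subF_join. Qed.

Lemma c_lt1_of_invertible_rangeE : invertible_between ip (range E) PFH PFE -> c < 1.
Proof. exact: c_lt1_of_invertible subF_rangeE. Qed.

Lemma opnorm_inverse_join G : c < 1 -> (exists x, E x != 0) ->
  is_inverse_between ip (range P) (range P) A G -> opnorm_on ip (range P) G = s^-1.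
Proof.
by move=> c1 E0 invG; apply: opnorm_inverse c1 E0 PH_subspace maps_diff invG join_diff_lb subF_join.
Qed.

Lemma opnorm_inverse_rangeE G : c < 1 -> (exists x, E x != 0) ->
  is_inverse_between ip (range E) PFH PFE G -> opnorm_on ip PFH G = s^-1.
Proof.
by move=> c1 E0 invG; apply: opnorm_inverse c1 E0 PFH_subspace maps_PFE invG rangeE_PFE_lb subF_rangeE.
Qed.

Lemma meet0_sum_of_invertible_join Q : is_meet ip E F Q ->
  invertible_between ip (range P) (range P) A ->
  (forall x, Q x = 0) /\ range P = [set y | exists a b, y = E a + F b].
Proof.
move=> meetQ [_ [G [_ linG _ GA AG]]]; split.
  move=> x; have : range Q (Q x) by exists x.
  rewrite meetQ.2 => -[/(proj_rangeP projE) EQx /(proj_rangeP projF) FQx].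
  have PQx : range P (Q x) by apply/(proj_rangeP projP); rewrite -EQx join_projE.
  have := GA _ PQx; rewrite /A EQx FQx subrr => <-.
  by apply: linear_on0 linG; apply: range_subspace.
rewrite eqEsubset; split=> y; last by case=> a [b ->]; exists (E a + F b); rewrite ?join_fixes_sums.
by move=> /AG Ay; exists (G y), (- G y); rewrite (linN linF); apply/esym.
Qed.

Lemma c_lt1_of_meet0_sum Q : is_meet ip E F Q -> (forall x, Q x = 0) ->
  range P = [set y | exists a b, y = E a + F b] -> c < 1.
Proof.
move=> meetQ Q0 PH_sums; pose T x := x - F x.
have linT : linear T by apply: linear_sub.
have boundT x : `‖T x‖ <= 1 * `‖x‖ by rewrite mul1r ler_hnorm_sub_proj.
have boundF x : `‖F x‖ <= 1 * `‖x‖ by rewrite mul1r ler_hnorm_proj.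
pose Y := range P `&` [set y | F y = 0].
have mapsT x : range E x -> Y (T x).
  move/(proj_rangeP projE) => Ex; split.
    by apply/(proj_rangeP projP); rewrite (linB linP) join_projF -{1}Ex join_projE Ex.
  by rewrite /= (linB linF) (proj_idem projF) subrr.
have ontoT y : Y y -> exists2 x, range E x & T x = y.
  move=> [PHy /= Fy]; move: PHy; rewrite PH_sums => -[a [b yab]].
  exists (E a); first by exists a.
  by rewrite /T -[RHS]subr0 -Fy yab (linD linF) (proj_idem projF) [F (E a) + _]addrC addrKA.
have injT x : range E x -> T x = 0 -> x = 0.
  move=> EHx /eqP; rewrite subr_eq0 => /eqP Fx.
  have : range Q x by rewrite meetQ.2; split=> //; apply/(proj_rangeP projF).
  by case=> z _ <-; apply: Q0.
have subY : subspace Y by apply: subspaceI; [exact: range_subspace | exact: kernel_subspace].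
have clY : hclosed Y by apply: hclosedI; [exact: hclosed_range_proj | exact: hclosed_kernel boundF].
have [K boundK] := bounded_below_of_bijective (range_subspace linE) subY linT
  (hclosed_range_proj projE) clY boundT mapsT ontoT injT.
by apply: (c_lt1_of_bound (K := K)) => x Ex; apply: boundK; exists x.
Qed.

End TwoProjections.

End InnerProductSpace.

Theorem lemma3p7 (R : realType) (V : lmodType R[i]) (ip : V -> V -> R[i])
    (E F P Q : V -> V) :
  is_hilbert ip ->
  is_projection ip E -> is_projection ip F ->
  is_join ip E F P -> is_meet ip E F Q ->
  let EH := range E in
  let PH := range P in
  let PFH := range (fun x => P x - F x) in
  let EmF := fun x => E x - F x in
  let PFE := fun x => P (E x) - F (E x) in
  (* (1) <-> (2) *)
  (((forall x, Q x = 0) /\ PH = [set y | exists a b, y = E a + F b])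
     <-> invertible_between ip PH PH EmF) /\
  (* (2) <-> (3) *)
  (invertible_between ip PH PH EmF <-> invertible_between ip EH PFH PFE) /\
  (* norm identities *)
  (invertible_between ip PH PH EmF -> (exists x, E x != 0) ->
   forall G1 G2 : V -> V,
     is_inverse_between ip PH PH EmF G1 ->
     is_inverse_between ip EH PFH PFE G2 ->
     opnorm_on ip PH G1 = (Num.sqrt (1 - opnorm ip (fun x => E (F x)) ^+ 2))^-1 /\
     opnorm_on ip PFH G2 = (Num.sqrt (1 - opnorm ip (fun x => E (F x)) ^+ 2))^-1).
Proof.
move=> hilbV projE projF joinP meetQ EH PH PFH EmF PFE.
have c_lt1_of_2 := c_lt1_of_invertible_join hilbV projE projF joinP.
have inv2 := invertible_join_of_c_lt1 hilbV projE projF joinP.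
have inv3 := invertible_rangeE_of_c_lt1 hilbV projE projF joinP.
split; [split | split; [split | ]].
- by case=> Q0 PH_sums; apply/inv2/(c_lt1_of_meet0_sum hilbV projE projF joinP meetQ).
- exact: meet0_sum_of_invertible_join meetQ.
- by move/c_lt1_of_2/inv3.
- by move/(c_lt1_of_invertible_rangeE hilbV projE projF joinP)/inv2.
- move=> /c_lt1_of_2 c1 E0 G1 G2 invG1 invG2; split.
  + exact: opnorm_inverse_join invG1.
  + exact: opnorm_inverse_rangeE invG2.
Qed.
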